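(* Let $G$ be a $2$-connected graph with average degree less than $3$ and with at least two vertices of degree $2$. Then $G$ contains an induced subgraph $T$ which is a tree such that every vertex of $T$ has exactly one neighbor in $V(G)\setminus V(T)$.
   Context: All graphs are finite and simple. *)

From mathcomp Require Import all_boot.
Set Implicit Arguments. Unset Strict Implicit. Unset Printing Implicit Defensive.

(* A finite simple graph: vertex type V : finType, adjacency e : rel V,
   assumed symmetric and irreflexive (hypotheses of the theorem). *)

Definition induced_rel (V : finType) (e : rel V) (S : {set V}) : rel V :=
  [rel x y | [&& e x y, x \in S & y \in S]].

Definition connected_on (V : finType) (e : rel V) (S : {set V}) : Prop :=
  forall x y, x \in S -> y \in S -> connect (induced_rel e S) x y.

Definition has_cycle_on (V : finType) (e : rel V) (S : {set V}) : Prop :=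
  exists s : seq V, [/\ uniq s, 3 <= size s, all (mem S) s & cycle e s].

Definition induced_tree (V : finType) (e : rel V) (S : {set V}) : Prop :=
  [/\ S != set0, connected_on e S & ~ has_cycle_on e S].

Definition deg (V : finType) (e : rel V) (x : V) : nat := #|[set y | e x y]|.

Definition two_connected (V : finType) (e : rel V) : Prop :=
  2 < #|V| /\ forall X : {set V}, #|X| < 2 -> connected_on e (~: X).

From mathcomp Require Import all_boot zify.
Set Implicit Arguments. Unset Strict Implicit. Unset Printing Implicit Defensive.

(* Call an induced tree S inside a connected vertex set U bounded by budgets t : V -> nat
   when every v in S has fewer than t v neighbours in U \ S.  Such a tree exists as soon as
   2 + sum_U deg_U <= |U| + sum_U t, by induction on |U|: a vertex with deg_U v < t v is one
   by itself; a non-cut vertex u with t u < deg_U u is deleted, charging one unit to the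
   budget of each of its neighbours; otherwise a smallest component of U - c, over all
   cut vertices c, yields either a non-cut vertex of degree 1, which is deleted and put
   back as a leaf when its neighbour lies in the tree found for the rest, or two adjacent
   non-cut vertices, which form a bounded tree on their own.

   For the theorem take U = V and t = 2 when sum deg <= 3|V| - 2.  Otherwise
   sum deg = 3|V| - 1, so the two vertices of degree 2 force a vertex c of degree at least
   4, and U = V - c (connected by 2-connectivity) with t v = 2 - [v ~ c] works.  Either way
   every vertex of the tree has at most one neighbour outside it.  A vertex z of the tree
   with none is repaired by cutting off the branch of S - z at a neighbour y of z: then z
   has exactly one outside neighbour because S is acyclic, and no other vertex gains one. *)

Section InducedTrees.
Variables (V : finType) (e : rel V).
Hypotheses (e_sym : symmetric e) (e_irr : irreflexive e).

Lemma induced_rel_sym (A : {set V}) : symmetric (induced_rel e A).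
Proof. by move=> x y; rewrite /induced_rel /= e_sym (andbC (x \in A)). Qed.

Lemma induced_rel_sub (A : {set V}) : subrel (induced_rel e A) e.
Proof. by move=> x y /andP[]. Qed.

Lemma connect_induced_sym (A : {set V}) : connect_sym (induced_rel e A).
Proof. exact: sym_connect_sym (@induced_rel_sym A). Qed.

Lemma connect_induced1 (A : {set V}) x y :
  e x y -> x \in A -> y \in A -> connect (induced_rel e A) x y.
Proof. by move=> exy xA yA; apply: connect1; rewrite /induced_rel /= exy xA yA. Qed.

Lemma connect_induced_subset (A B : {set V}) x y : A \subset B ->
  connect (induced_rel e A) x y -> connect (induced_rel e B) x y.
Proof.
move=> /subsetP AB; apply: connect_sub => a b /and3P[eab aA bA].
by apply: connect_induced1; rewrite ?AB.
Qed.

Lemma connected_on_hub (A : {set V}) c :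
  (forall a, a \in A -> connect (induced_rel e A) a c) -> connected_on e A.
Proof.
move=> to_c a b aA bA.
by rewrite (connect_trans (to_c a aA)) // connect_induced_sym to_c.
Qed.

Lemma connected_on_adj (A : {set V}) x : connected_on e A -> x \in A -> 1 < #|A| ->
  exists2 w, w \in A & e x w.
Proof.
move=> connA xA; rewrite (cardsD1 x) xA ltnS card_gt0 => /set0Pn[y].
rewrite !inE => /andP[yx yA]; case/connectP: (connA x y xA yA) => [[|w p]] /=.
  by move=> _ eq_yx; rewrite eq_yx eqxx in yx.
by case/andP=> /and3P[exw _ wA] _ _; exists w.
Qed.

Lemma induced_path_mem (A : {set V}) x p : path (induced_rel e A) x p -> all (mem A) p.
Proof. by elim: p x => //= y p IHp x /andP[/and3P[_ _ ->] /IHp]. Qed.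

Lemma has_cycle_on_subset (A B : {set V}) :
  A \subset B -> has_cycle_on e A -> has_cycle_on e B.
Proof.
move=> /subsetP AB [s [s_uniq s_ge3 /allP sA s_cycle]].
by exists s; split=> //; apply/allP => x /sA /AB.
Qed.

Lemma no_cycle_on_small (S : {set V}) : #|S| <= 2 -> ~ has_cycle_on e S.
Proof.
move=> S_le2 [s [s_uniq s_ge3 /allP sS _]].
have : size s <= #|S| by rewrite cardE; apply: uniq_leq_size => // x /sS; rewrite mem_enum.
by move/leq_trans/(_ S_le2)/(leq_trans s_ge3).
Qed.

Lemma induced_tree1 v : induced_tree e [set v].
Proof.
split; first by apply/set0Pn; exists v; rewrite inE.
- by move=> x y; rewrite !inE => /eqP-> /eqP->.
- by apply: no_cycle_on_small; rewrite cards1.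
Qed.

Lemma induced_tree2 x y : e x y -> induced_tree e [set x; y].
Proof.
move=> exy; split; first by apply/set0Pn; exists x; rewrite !inE eqxx.
- apply: (@connected_on_hub _ x) => a; rewrite !inE => /orP[]/eqP->//.
  by rewrite connect_induced_sym connect_induced1 // !inE eqxx ?orbT.
- by apply: no_cycle_on_small; rewrite cards2; case: (_ != _).
Qed.

Lemma cycle_two_adj (s : seq V) x : uniq s -> 2 < size s -> cycle e s ->
  x \in s -> exists a b, [/\ a != b, a \in s, b \in s, e x a & e x b].
Proof.
move=> s_uniq s_ge3 s_cycle xs; have mem_r y : y \in rot (index x s) s -> y \in s.
  by rewrite mem_rot.
move: s_uniq s_ge3 s_cycle mem_r; rewrite -(rot_uniq (index x s)) -(size_rot (index x s)).
rewrite -(rot_cycle (index x s)) rot_index //.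
case: (drop _ _ ++ _) => [|a [|b q]] //= /and4P[_ aq _ _] _ /and3P[exa _].
rewrite rcons_path => /andP[_ elx] mem_r.
have lq : last b q \in b :: q := mem_last b q.
exists a, (last b q); split=> [|||//|]; last by rewrite e_sym.
- by apply: contraNneq aq => ->.
- by apply: mem_r; rewrite !inE eqxx orbT.
- by apply: mem_r; rewrite (in_cons x) (in_cons a) lq !orbT.
Qed.

Lemma induced_tree_add_leaf (S : {set V}) x p :
  induced_tree e S -> x \notin S -> p \in S -> e x p ->
  (forall w, w \in S -> e x w -> w = p) -> induced_tree e (x |: S).
Proof.
move=> [S0 S_conn S_acyc] xS pS exp p_uniq; split.
- by apply/set0Pn; exists x; rewrite !inE eqxx.
- apply: (@connected_on_hub _ p) => a; rewrite !inE => /orP[/eqP->|aS].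
    by apply: connect_induced1; rewrite // !inE ?eqxx ?pS ?orbT.
  by apply: connect_induced_subset (S_conn a p aS pS); apply: subsetUr.
- move=> [s [s_uniq s_ge3 /allP sS s_cycle]]; case xs: (x \in s).
    have [a [b [ab as_ bs exa exb]]] := cycle_two_adj s_uniq s_ge3 s_cycle xs.
    have inS w : w \in s -> e x w -> w \in S.
      move=> ws exw; move: (sS w ws); rewrite !inE => /orP[/eqP wx|//].
      by rewrite wx e_irr in exw.
    by rewrite (p_uniq a (inS a as_ exa) exa) (p_uniq b (inS b bs exb) exb) eqxx in ab.
  apply: S_acyc; exists s; split=> //; apply/allP => y ys.
  by move: (sS y ys); rewrite !inE => /orP[/eqP yx|//]; rewrite -yx ys in xs.
Qed.

Definition deg_in (A : {set V}) v := #|[set w in A | e v w]|.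

Lemma deg_in_setT v : deg_in [set: V] v = deg e v.
Proof. by apply: eq_card => w; rewrite !inE. Qed.

Lemma deg_in_subset (A B : {set V}) v : A \subset B -> deg_in A v <= deg_in B v.
Proof.
move=> /subsetP AB; apply: subset_leq_card; apply/subsetP => w.
by rewrite !inE => /andP[/AB-> ->].
Qed.

Lemma deg_in_setU (A B : {set V}) v : deg_in (A :|: B) v <= deg_in A v + deg_in B v.
Proof.
apply: leq_trans (leq_card_setU _ _); apply: subset_leq_card; apply/subsetP => w.
by rewrite !inE andb_orl.
Qed.

Lemma deg_in_setD1 (A : {set V}) u v :
  u \in A -> deg_in A v = deg_in (A :\ u) v + e v u.
Proof.
move=> uA; rewrite /deg_in (cardsD1 u) !inE uA addnC; congr (_ + _).
by apply: eq_card => w; rewrite !inE andbA.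
Qed.

Lemma sum_adj (A : {set V}) u : \sum_(v in A) (e v u : nat) = deg_in A u.
Proof.
rewrite /deg_in -sum1_card big_mkcond [RHS]big_mkcond /=.
by apply: eq_bigr => v _; rewrite inE e_sym; case: (v \in A); case: (e u v).
Qed.

Lemma sum_deg_in_setD1 (A : {set V}) u : u \in A ->
  \sum_(v in A) deg_in A v = \sum_(v in A :\ u) deg_in (A :\ u) v + 2 * deg_in A u.
Proof.
move=> uA; rewrite (big_setD1 u uA) /=.
rewrite (eq_bigr _ (fun v _ => deg_in_setD1 v uA)) big_split /= sum_adj.
by rewrite [deg_in A u](deg_in_setD1 u uA) e_irr addn0; lia.
Qed.

Definition component (A : {set V}) a := [set b in A | connect (induced_rel e A) a b].

Lemma component_subset (A : {set V}) a : component A a \subset A.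
Proof. by apply/subsetP => b; rewrite inE => /andP[]. Qed.

Lemma mem_component_id (A : {set V}) a : a \in A -> a \in component A a.
Proof. by move=> aA; rewrite inE aA connect0. Qed.

Lemma component_closed (A : {set V}) c a b :
  a \in component A c -> b \in A -> e a b -> b \in component A c.
Proof.
rewrite !inE => /andP[aA cab] bA eab; rewrite bA.
by apply: connect_trans cab (connect_induced1 eab aA bA).
Qed.

Definition connectedb (A : {set V}) :=
  [forall x in A, forall y in A, connect (induced_rel e A) x y].

Lemma connectedP (A : {set V}) : reflect (connected_on e A) (connectedb A).
Proof.
apply: (iffP forall_inP) => [conn x y xA yA|conn x xA].
  by move/forall_inP: (conn x xA) => /(_ y yA).
by apply/forall_inP => y yA; apply: conn.
Qed.

Lemma not_connected_avoid (A : {set V}) c : ~~ connectedb A -> c \in A ->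
  exists2 z, z \in A & ~~ connect (induced_rel e A) z c.
Proof.
move=> /forall_inPn[x xA /forall_inPn[y yA xy]] cA.
case xc: (connect (induced_rel e A) x c); last by exists x; rewrite ?xc.
exists y => //; apply: contra xy => yc.
by rewrite (connect_trans xc) // connect_induced_sym.
Qed.

Lemma connect_induced_setD1 (A : {set V}) c z b :
  ~~ connect (induced_rel e A) z c -> connect (induced_rel e A) z b ->
  connect (induced_rel e (A :\ c)) z b.
Proof.
move=> zc /connectP[p zp ->]; elim: p z zc zp => //= w p IHp z zc.
case/andP=> /and3P[ezw zA wA] wp.
have wc : ~~ connect (induced_rel e A) w c.
  by apply: contra zc; apply: connect_trans (connect_induced1 ezw zA wA).
have neq_c x : ~~ connect (induced_rel e A) x c -> x != c.
  by apply: contraNneq => ->.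
apply: connect_trans (IHp w wc wp); apply: connect_induced1 => //.
  by rewrite !inE neq_c.
by rewrite !inE neq_c.
Qed.

Lemma connect_induced_setD (U W : {set V}) c z : connected_on e U ->
  c \in U -> c \notin W ->
  (forall w y, w \in W -> y \in U -> y != c -> e w y -> y \in W) ->
  z \in U -> z \notin W -> connect (induced_rel e (U :\: W)) z c.
Proof.
move=> connU cU cW W_closed zU zW; case/connectP: (connU z c zU cU) => p.
elim: p z zU zW => [z _ _ _ ->|w p IHp z zU zW /= /andP[/and3P[ezw _ wU] wp] c_last].
  exact: connect0.
have [->|zc] := eqVneq z c; first exact: connect0.
have wW : w \notin W.
  by apply: contra zW => wW; apply: W_closed wW zU zc _; rewrite e_sym.
apply: connect_trans (IHp w wU wW wp c_last); apply: connect_induced1 => //.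
  by rewrite inE zW.
by rewrite inE wW.
Qed.

Lemma min_component_noncut (U : {set V}) c a y : connected_on e U -> c \in U ->
  (forall c' a', c' \in U -> a' \in U :\ c' -> component (U :\ c') a' != U :\ c' ->
     #|component (U :\ c) a| <= #|component (U :\ c') a'|) ->
  y \in component (U :\ c) a -> connected_on e (U :\ y).
Proof.
(* A component of U - y missing c would be a smaller proper component inside W - y. *)
move=> connU cU W_min yW; set W := component (U :\ c) a in W_min yW.
have W_sub : W \subset U :\ c := component_subset _ _.
have cW : c \notin W by apply/negP => /(subsetP W_sub); rewrite !inE eqxx.
move: (subsetP W_sub y yW); rewrite !inE => /andP[yc yU].
apply/connectedP; apply: contraT => /not_connected_avoid.
have cUy : c \in U :\ y by rewrite !inE cU eq_sym yc.
case/(_ c cUy) => z zUy zc; move: (zUy); rewrite !inE => /andP[zy zU].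
have zW : z \in W.
  apply: contraT => zW.
  have W_closed w x : w \in W -> x \in U -> x != c -> e w x -> x \in W.
    by move=> wW xU xc; apply: component_closed wW _; rewrite !inE xc.
  have UW_sub : U :\: W \subset U :\ y.
    apply/subsetP => v; rewrite in_setD in_setD1 => /andP[vW ->]; rewrite andbT.
    by apply: contraNneq vW => ->.
  have := connect_induced_setD connU cU cW W_closed zU zW.
  by move/(connect_induced_subset UW_sub); rewrite (negbTE zc).
have Y_sub : component (U :\ y) z \subset W :\ y.
  apply/subsetP => b; rewrite inE => /andP[bUy zb].
  have Uyc_sub : U :\ y :\ c \subset U :\ c.
    by apply/subsetP => v; rewrite !inE => /and3P[-> _ ->].
  have bc : b != c by apply: contraNneq zc => <-.
  move: zW bUy; rewrite !inE bc => /andP[_ az] /andP[-> ->] /=.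
  exact: connect_trans az (connect_induced_subset Uyc_sub (connect_induced_setD1 zc zb)).
have Y_proper : component (U :\ y) z != U :\ y.
  by apply: contraNneq zc => Y_eq; move: cUy; rewrite -{1}Y_eq inE => /andP[].
have := W_min y z yU zUy Y_proper; have := subset_leq_card Y_sub.
by rewrite (cardsD1 y W) yW add1n => Y_le /leq_trans/(_ Y_le); rewrite ltnn.
Qed.

Lemma noncut_leaf_or_edge (U : {set V}) : connected_on e U -> 1 < #|U| ->
  (exists x, [/\ x \in U, connected_on e (U :\ x) & deg_in U x = 1]) \/
  (exists x y, [/\ e x y, x \in U, y \in U, connected_on e (U :\ x)
                 & connected_on e (U :\ y)]).
Proof.
move=> connU U_gt1.
have [x xU] : exists x, x \in U by apply/set0Pn; rewrite -card_gt0 ltnW.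
case: (boolP [exists c in U, exists a in U :\ c, component (U :\ c) a != U :\ c]);
    last first.
  rewrite negb_exists_in => /forall_inP all_full.
  have noncut u : u \in U -> connected_on e (U :\ u).
    move=> uU v w vU wU.
    move/exists_inPn: (all_full u uU) => /(_ v vU); rewrite negbK => /eqP full.
    by move: wU; rewrite -{1}full inE => /andP[].
  have [y yU exy] := connected_on_adj connU xU U_gt1.
  by right; exists x, y; split=> //; apply: noncut.
case/exists_inP=> c0 c0U /exists_inP[a0 a0U a0_proper].
pose P n := [exists c in U, exists a in U :\ c,
  (component (U :\ c) a != U :\ c) && (#|component (U :\ c) a| == n)].
have P_ex : exists n, P n.
  exists #|component (U :\ c0) a0|; apply/exists_inP; exists c0 => //.
  by apply/exists_inP; exists a0; rewrite // a0_proper eqxx.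
case: (ex_minnP P_ex) => _ /exists_inP[c cU /exists_inP[a aUc /andP[_ /eqP <-]]] W_min.
have noncut y : y \in component (U :\ c) a -> connected_on e (U :\ y).
  apply: min_component_noncut connU cU _ => c' a' c'U a'U a'_proper.
  apply: W_min; apply/exists_inP; exists c' => //.
  by apply/exists_inP; exists a'; rewrite // a'_proper eqxx.
have aW := mem_component_id aUc.
move: (aUc); rewrite !inE => /andP[ac aU].
case: (leqP (deg_in U a) 1) => [a_le1|a_gt1].
  left; exists a; split=> //; first exact: noncut.
  apply/eqP; rewrite eqn_leq a_le1 card_gt0.
  have [w wU eaw] := connected_on_adj connU aU U_gt1.
  by apply/set0Pn; exists w; rewrite inE wU eaw.
have : 0 < deg_in (U :\ c) a by rewrite (deg_in_setD1 a cU) in a_gt1; lia.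
rewrite card_gt0 => /set0Pn[b]; rewrite inE => /andP[bUc eab].
right; exists a, b; split=> //.
- by move: bUc; rewrite inE => /andP[].
- exact: noncut.
- exact/noncut/(component_closed aW bUc eab).
Qed.

Lemma deg_in_setD_lt (U S : {set V}) v w :
  w \in U -> w \in S -> e v w -> deg_in (U :\: S) v < deg_in U v.
Proof.
move=> wU wS evw; rewrite (deg_in_setD1 v wU) evw addn1 ltnS.
by apply: deg_in_subset; apply/subsetP => x; rewrite !inE => /andP[xS ->];
  rewrite andbT; apply: contraNneq xS => ->.
Qed.

Definition bounded_tree (U : {set V}) (t : V -> nat) (S : {set V}) :=
  [/\ S \subset U, induced_tree e S & {in S, forall v, deg_in (U :\: S) v < t v}].

Lemma bounded_tree1 (U : {set V}) t v :
  v \in U -> deg_in U v < t v -> bounded_tree U t [set v].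
Proof.
move=> vU dv; split=> [||w /set1P ->]; [by rewrite sub1set | exact: induced_tree1 |].
exact: leq_ltn_trans (deg_in_subset _ (subsetDl _ _)) dv.
Qed.

Lemma bounded_tree2 (U : {set V}) t x y : e x y -> x \in U -> y \in U ->
  deg_in U x <= t x -> deg_in U y <= t y -> bounded_tree U t [set x; y].
Proof.
move=> exy xU yU dx dy; split=> [||v]; first by rewrite subUset !sub1set xU.
  exact: induced_tree2.
rewrite !inE => /orP[]/eqP->.
  by apply: leq_trans dx; apply: (deg_in_setD_lt yU); rewrite ?inE ?eqxx ?orbT.
by apply: leq_trans dy; apply: (deg_in_setD_lt xU); rewrite ?inE ?eqxx // e_sym.
Qed.

Lemma bounded_tree_setD1 (U : {set V}) t u S : u \in U ->
  bounded_tree (U :\ u) (fun v => t v - e v u) S -> bounded_tree U t S.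
Proof.
move=> uU [SU S_tree S_bd].
have uS : u \notin S by apply/negP => /(subsetP SU); rewrite !inE eqxx.
split=> // [|v vS]; first exact: subset_trans SU (subsetDl _ _).
rewrite (deg_in_setD1 v (_ : u \in U :\: S)) ?inE ?uS //.
by rewrite setDDl setUC -setDDl; have := S_bd v vS; lia.
Qed.

Lemma bounded_tree_add_leaf (U : {set V}) t x S : x \in U -> deg_in U x = 1 ->
  t x = 1 -> bounded_tree (U :\ x) t S -> exists S', bounded_tree U t S'.
Proof.
move=> xU /eqP/cards1P[p x_adj] tx [SU S_tree S_bd].
have p_uniq w : w \in U -> e x w -> w = p.
  by move=> wU exw; apply/set1P; rewrite -x_adj inE wU exw.
have := set11 p; rewrite -x_adj inE => /andP[pU exp].
have xS : x \notin S by apply/negP => /(subsetP SU); rewrite !inE eqxx.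
have SU' : S \subset U := subset_trans SU (subsetDl _ _).
have [pS|pS] := boolP (p \in S).
  exists (x |: S); split=> [||v]; first by rewrite subUset sub1set xU.
    apply: (induced_tree_add_leaf S_tree xS pS exp) => w /(subsetP SU') wU.
    exact: p_uniq.
  rewrite -setDDl in_setU1 => /orP[/eqP->|vS]; last exact: S_bd.
  rewrite tx ltnS leqn0 cards_eq0; apply/eqP/setP => w; rewrite !inE.
  apply/negbTE/negP => /andP[/and3P[wS _ wU] exw].
  by rewrite (p_uniq w wU exw) pS in wS.
exists S; split=> // v vS; rewrite (deg_in_setD1 v (_ : x \in U :\: S)) ?inE ?xS //.
have -> : e v x = false.
  by apply: contraNF pS; rewrite e_sym => /(p_uniq v (subsetP SU' v vS)) <-.
by rewrite addn0 setDDl setUC -setDDl; apply: S_bd.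
Qed.

Lemma sum_weight_setD1 (U : {set V}) (t : V -> nat) u : u \in U ->
  \sum_(v in U) t v <= t u + \sum_(v in U :\ u) (t v - e v u) + deg_in U u.
Proof.
move=> uU; rewrite (big_setD1 u uU) -addnA leq_add2l.
rewrite [deg_in U u](deg_in_setD1 u uU) e_irr addn0 -sum_adj -big_split /=.
by apply: leq_sum => v _; lia.
Qed.

Lemma exists_bounded_tree (U : {set V}) (t : V -> nat) :
  U != set0 -> connected_on e U ->
  2 + \sum_(v in U) deg_in U v <= #|U| + \sum_(v in U) t v ->
  exists S, bounded_tree U t S.
Proof.
have [n] := ubnP #|U|; elim: n => // n IHn in U t *.
rewrite ltnS => U_le_n U0 connU weight.
have [/exists_inP[v vU dv]|/exists_inPn t_le] :=
  boolP [exists v in U, deg_in U v < t v].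
  by exists [set v]; apply: bounded_tree1.
have {}t_le v : v \in U -> t v <= deg_in U v by move=> vU; rewrite leqNgt t_le.
have U_gt1 : 1 < #|U|.
  have : \sum_(v in U) t v <= \sum_(v in U) deg_in U v by apply: leq_sum.
  lia.
have shrink u : u \in U -> [/\ #|U| = #|U :\ u| + 1, #|U :\ u| < n & U :\ u != set0].
  move=> uU; rewrite -card_gt0; have := cardsD1 u U; rewrite uU add1n.
  by split; lia.
have [/exists_inP[u uU /andP[/connectedP connUu tu]]|/exists_inPn cut_or_le] :=
  boolP [exists u in U, connectedb (U :\ u) && (t u < deg_in U u)].
  have [cardU Uu_lt Uu0] := shrink u uU.
  have [S bS] : exists S, bounded_tree (U :\ u) (fun v => t v - e v u) S.
    apply: IHn Uu_lt Uu0 connUu _.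
    by have := sum_deg_in_setD1 uU; have := sum_weight_setD1 t uU; lia.
  by exists S; apply: bounded_tree_setD1 bS.
have noncut_le u : u \in U -> connected_on e (U :\ u) -> deg_in U u <= t u.
  by move=> uU /connectedP connUu; move: (cut_or_le u uU); rewrite connUu -leqNgt.
case: (noncut_leaf_or_edge connU U_gt1) => [[x [xU connUx dx]]|].
  have tx : t x = 1 by apply/eqP; rewrite eqn_leq -{1}dx t_le // -dx noncut_le.
  have [cardU Ux_lt Ux0] := shrink x xU.
  have [S bS] : exists S, bounded_tree (U :\ x) t S.
    apply: IHn Ux_lt Ux0 connUx _.
    rewrite [\sum_(v in U) t v](big_setD1 x xU) /= in weight.
    by have := sum_deg_in_setD1 xU; lia.
  exact: bounded_tree_add_leaf xU dx tx bS.
case=> x [y [exy xU yU connUx connUy]].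
by exists [set x; y]; apply: bounded_tree2; rewrite ?noncut_le.
Qed.

Lemma tree_deg_in_component_le1 (S : {set V}) z y : induced_tree e S ->
  z \in S -> deg_in (component (S :\ z) y) z <= 1.
Proof.
move=> [_ _ S_acyc] zS; rewrite leqNgt; apply/negP => /card_gt1P[y1 [y2 []]].
rewrite !inE => /andP[/andP[/andP[y1z y1S] yy1] ezy1] /andP[/andP[_ yy2] ezy2] y12.
have : connect (induced_rel e (S :\ z)) y1 y2.
  by rewrite (connect_trans _ yy2) // connect_induced_sym.
case/connectP=> p /shortenP[p' y1p' p'_uniq _] y2_last.
have /allP p'Sz := induced_path_mem y1p'.
apply: S_acyc; exists [:: z, y1 & p']; split.
- rewrite cons_uniq p'_uniq andbT inE negb_or; apply/andP; split.
    by rewrite eq_sym.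
  by apply/negP => /p'Sz; rewrite !inE eqxx.
- by case: p' y2_last {y1p' p'_uniq p'Sz} => [/= y21|]; rewrite ?y21 ?eqxx in y12.
- rewrite /= zS y1S /=.
  by apply/allP => w /p'Sz; rewrite !inE => /andP[].
- rewrite /= rcons_path ezy1 -y2_last e_sym ezy2 andbT /=.
  exact: (sub_path (@induced_rel_sub (S :\ z)) y1p').
Qed.

Lemma induced_tree_setD_component (S : {set V}) z y : induced_tree e S -> z \in S ->
  induced_tree e (S :\: component (S :\ z) y).
Proof.
set Y := component (S :\ z) y; move=> [_ S_conn S_acyc] zS.
have zY : z \notin Y by rewrite !inE eqxx.
split; first by apply/set0Pn; exists z; rewrite inE zY.
- apply: (@connected_on_hub _ z) => v vS'.
  have /connectP[p vp z_last] := S_conn v z (subsetP (subsetDl _ _) v vS') zS.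
  elim: p v vS' vp z_last => [v _ _ -> //|w p IHp v vS' /=].
  case/andP=> /and3P[evw vS wS] wp z_last.
  have [->|vz] := eqVneq v z; first exact: connect0.
  have wS' : w \in S :\: Y.
    move: (vS'); rewrite !in_setD wS andbT => /andP[vY _]; apply: contra vY => wY.
    by apply: component_closed wY _ _; rewrite ?inE ?vz // e_sym.
  exact: connect_trans (connect_induced1 evw vS' wS') (IHp w wS' wp z_last).
- by move/(has_cycle_on_subset (subsetDl _ _)).
Qed.

Lemma tree_out_eq1_of_le1 (S : {set V}) : (forall v, exists w, e v w) ->
  induced_tree e S -> {in S, forall v, deg_in (~: S) v <= 1} ->
  exists T, induced_tree e T /\ {in T, forall v, deg_in (~: T) v = 1}.
Proof.
move=> has_adj; have [n] := ubnP #|S|; elim: n => // n IHn in S *.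
rewrite ltnS => S_le_n S_tree S_bd.
have [/forall_inP S_eq1|/forall_inPn[z zS z_ne1]] :=
  boolP [forall v in S, deg_in (~: S) v == 1].
  by exists S; split=> // v /S_eq1/eqP.
have /eqP z0 : deg_in (~: S) z == 0 by move: (S_bd z zS) z_ne1; case: deg_in => [|[]].
have [y ezy] := has_adj z.
have yS : y \in S.
  apply: contraT => yS; move/eqP: z0; rewrite /deg_in cards_eq0.
  by move=> /eqP/setP/(_ y); rewrite !inE yS ezy.
set Y := component (S :\ z) y.
have yY : y \in Y.
  apply: mem_component_id; rewrite !inE yS andbT.
  by apply: contraTneq ezy => ->; rewrite e_irr.
have S'_tree : induced_tree e (S :\: Y) by apply: induced_tree_setD_component.
apply: IHn S'_tree _ => [|v].
  apply: leq_trans S_le_n; rewrite (cardsD1 y S) yS ltnS.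
  apply: subset_leq_card; apply/subsetP => w.
  rewrite in_setD in_setD1 => /andP[wY ->].
  by rewrite andbT; apply: contraNneq wY => ->.
rewrite in_setD => /andP[vY vS]; rewrite setCD.
apply: leq_trans (deg_in_setU _ _ _) _.
have [->|vz] := eqVneq v z; first by rewrite z0 tree_deg_in_component_le1.
suff -> : deg_in Y v = 0 by rewrite addn0 S_bd.
apply/eqP; rewrite cards_eq0; apply/set0Pn => -[w]; rewrite inE => /andP[wY evw].
by move/negP: vY; apply; apply: component_closed wY _ _; rewrite ?inE ?vz // e_sym.
Qed.

Lemma sum_deg_in_setT : \sum_(v in [set: V]) deg_in [set: V] v = \sum_v deg e v.
Proof.
by rewrite (eq_bigr _ (fun v _ => deg_in_setT v)); apply: eq_bigl => v; rewrite inE.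
Qed.

Lemma tree_out_le1_of_sum : connected_on e [set: V] -> 0 < #|V| ->
  \sum_v deg e v + 2 <= 3 * #|V| ->
  exists S, induced_tree e S /\ {in S, forall v, deg_in (~: S) v <= 1}.
Proof.
move=> connV V_gt0 sum_le.
have [S [_ S_tree S_bd]] : exists S, bounded_tree [set: V] (fun=> 2) S.
  apply: exists_bounded_tree connV _; first by rewrite -card_gt0 cardsT.
  by rewrite sum_deg_in_setT sum_nat_const cardsT; lia.
by exists S; split=> // v vS; rewrite -setTD; apply: S_bd.
Qed.

Lemma tree_out_le1_of_sum_setC1 c : connected_on e (~: [set c]) -> 1 < #|V| ->
  \sum_v deg e v + 5 <= 3 * #|V| + deg e c ->
  exists S, induced_tree e S /\ {in S, forall v, deg_in (~: S) v <= 1}.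
Proof.
move=> connU V_gt1 sum_le; rewrite -setTD in connU.
have cT : c \in [set: V] := in_setT c.
have [S [SU S_tree S_bd]] :
    exists S, bounded_tree ([set: V] :\ c) (fun v => 2 - e v c) S.
  apply: exists_bounded_tree connU _.
    by rewrite -card_gt0; have := cardsD1 c [set: V]; rewrite cT cardsT; lia.
  have sum_t : \sum_(v in [set: V] :\ c) (2 - e v c) + deg e c = 2 * #|[set: V] :\ c|.
    rewrite -deg_in_setT (deg_in_setD1 c cT) e_irr addn0 -sum_adj -big_split /=.
    by rewrite mulnC -sum_nat_const; apply: eq_bigr => v _; case: (e v c).
  have := sum_deg_in_setD1 cT; rewrite sum_deg_in_setT deg_in_setT.
  by have := cardsD1 c [set: V]; rewrite cT cardsT; lia.
exists S; split=> // v vS.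
have cS : c \notin S by apply/negP => /(subsetP SU); rewrite !inE eqxx.
rewrite -setTD (deg_in_setD1 v (_ : c \in [set: V] :\: S)) ?inE ?cS //.
by rewrite setDDl setUC -setDDl; have := S_bd v vS; lia.
Qed.

Lemma two_connected_connected : two_connected e -> connected_on e [set: V].
Proof. by case=> _ conn; rewrite -setC0; apply: conn; rewrite cards0. Qed.

Lemma two_connected_adj : two_connected e -> forall v, exists w, e v w.
Proof.
move=> two_conn v; have [V_gt2 _] := two_conn.
have [|w _ evw] := connected_on_adj (two_connected_connected two_conn) (in_setT v).
  by rewrite cardsT ltnW.
by exists w.
Qed.

Lemma sum_add_card_eq2_le (T : finType) (f : T -> nat) : (forall x, f x <= 3) ->
  \sum_x f x + #|[set x | f x == 2]| <= 3 * #|T|.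
Proof.
move=> f_le3; rewrite -sum1dep_card [X in _ + X]big_mkcond -big_split /=.
rewrite mulnC -sum_nat_const; apply: leq_sum => x _.
by have := f_le3 x; case: eqP => [->|_]; lia.
Qed.

Lemma exists_tree_out_le1 : two_connected e -> \sum_v deg e v < 3 * #|V| ->
  2 <= #|[set x | deg e x == 2]| ->
  exists S, induced_tree e S /\ {in S, forall v, deg_in (~: S) v <= 1}.
Proof.
move=> two_conn sum_lt deg2; have [V_gt2 conn] := two_conn.
have [sum_le|sum_gt] := leqP (\sum_v deg e v + 2) (3 * #|V|).
  by apply: tree_out_le1_of_sum (two_connected_connected two_conn) _ sum_le; lia.
have [c deg_c] : exists c, 3 < deg e c.
  apply/existsP; apply: contraT; rewrite negb_exists => /forallP deg_le3.
  have le3 x : deg e x <= 3 by rewrite leqNgt deg_le3.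
  by have := sum_add_card_eq2_le le3; lia.
by apply: (@tree_out_le1_of_sum_setC1 c); [apply: conn; rewrite cards1 | lia | lia].
Qed.

End InducedTrees.

Theorem mainTheorem9 (V : finType) (e : rel V)
  (e_sym : symmetric e) (e_irr : irreflexive e) :
  two_connected e ->
  \sum_(x : V) deg e x < 3 * #|V| ->
  2 <= #|[set x : V | deg e x == 2]| ->
  exists S : {set V},
    induced_tree e S /\
    forall x, x \in S -> #|[set y : V | e x y & y \notin S]| = 1.
Proof.
move=> two_conn sum_lt deg2.
have [S [S_tree S_bd]] := exists_tree_out_le1 e_sym e_irr two_conn sum_lt deg2.
have [T [T_tree T_bd]] :=
  tree_out_eq1_of_le1 e_sym e_irr (two_connected_adj two_conn) S_tree S_bd.
exists T; split=> // x xT; rewrite -(T_bd x xT).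
by apply: eq_card => y; rewrite !inE andbC.
Qed.
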